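(* Let $p\in[1,\infty)$, $w$ a weight sequence, $a\in L_{p,w}$ and $i\in\mathbb{N}$. Then $$S_i(a)+\tilde S_i(a)\le\|a\|_{p,w}^p=H_i(a)+\tilde H_i(a)=W_i(a)+\tilde W_i(a)\le S_i(a)+T_i(a).$$
   Context: A weight sequence is a sequence $w=(w_i)$ of positive reals with $w_1=1\ge w_2\ge\dots$, $w_i\to0$, and $\sum_i w_i=+\infty$. For a real sequence $a$, $\|a\|_{p,w}=\sup_{\sigma}\big(\sum_{i=1}^\infty |a_{\sigma_i}|^p w_i\big)^{1/p}$ over all permutations $\sigma$ of $\mathbb{N}$; $L_{p,w}$ is the set of real sequences with finite norm. For $a\in L_{p,w}$, let $\sigma=\sigma^a:\mathbb{N}\to\mathbb{N}$ be defined recursively: $\sigma_i$ is the element $j$ of $\mathbb{N}\setminus\{\sigma_1,\dots,\sigma_{i-1}\}$ with $|a_j|$ maximal, taking the smallest such index in case of ties (for $a\in L_{p,w}$ this is well defined, $\sigma$ is injective and $|a_{\sigma_i}|$ is nonincreasing). Write $\sigma^{-1}$ for its inverse on $\sigma(\mathbb{N})$, with the convention $w_{\sigma^{-1}_j}:=0$ if $j\notin\sigma(\mathbb{N})$. Definitions: $S_i(a)=\|(a_1,\dots,a_i,0,0,\dots)\|_{p,w}^p$; $\tilde S_i(a)=\sup_{\tau}\sum_{j=1}^\infty|a_{i+\tau_j}|^p w_{i+j}$ over permutations $\tau$ of $\mathbb{N}$ (the $p$-th power of the Lorentz-type norm of the tail $(a_{i+1},a_{i+2},\dots)$ with weights $(w_{i+1},w_{i+2},\dots)$);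 $H_i(a)=\sum_{j=1}^i|a_j|^p w_{\sigma^{-1}_j}$; $\tilde H_i(a)=\sum_{j=i+1}^\infty|a_j|^p w_{\sigma^{-1}_j}$; $W_i(a)=\sum_{j=1}^i|a_{\sigma_j}|^p w_j$; $\tilde W_i(a)=\sum_{j=i+1}^\infty|a_{\sigma_j}|^p w_j$; $T_i(a)=\|(a_{i+1},a_{i+2},\dots)\|_{p,w}^p$. *)

(* Sequences are 0-indexed: paper's a_k is (a (k-1)). *)
From HB Require Import structures.
From mathcomp Require Import all_boot all_order all_algebra.
From mathcomp Require Import all_classical all_reals all_analysis.
Set Implicit Arguments. Unset Strict Implicit. Unset Printing Implicit Defensive.
Import Order.TTheory GRing.Theory Num.Theory.
Local Open Scope classical_set_scope.
Local Open Scope ring_scope.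

Section Lorentz.
Variable R : realType.

Definition weight_seq (w : nat -> R) : Prop :=
  [/\ w 0%N = 1, (forall n, 0 < w n), (forall n, w n.+1 <= w n),
      w @ \oo --> 0 & (\sum_(k <oo) (w k)%:E = +oo)%E].

Definition lnormp (p : R) (w a : nat -> R) : \bar R :=
  ereal_sup [set (\sum_(k <oo) ((`|a (s k)| `^ p) * w k)%:E)%E
            | s in [set s : nat -> nat | bijective s]].

Definition in_Lpw (p : R) (w a : nat -> R) : Prop := (lnormp p w a < +oo)%E.

Definition greedy_pick (a : nat -> R) (prev : seq nat) : nat :=
  xget 0%N [set j | j \notin prev
                 /\ (forall k, k \notin prev -> `|a k| <= `|a j|)
                 /\ (forall k, (k < j)%N -> k \notin prev -> `|a k| < `|a j|)].

Fixpoint greedy_prefix (a : nat -> R) (n : nat) : seq nat :=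
  match n with
  | 0%N => [::]
  | n'.+1 => rcons (greedy_prefix a n') (greedy_pick a (greedy_prefix a n'))
  end.

(* sigma a i = paper's sigma_(i+1), i.e. 0-based *)
Definition sigma (a : nat -> R) (i : nat) : nat := nth 0%N (greedy_prefix a i.+1) i.

(* w_{sigma^{-1}_j}, with the convention 0 if j is not in the range of sigma *)
Definition w_sinv (a w : nat -> R) (j : nat) : R :=
  match pselect (exists i, sigma a i = j) with
  | left h => w (projT1 (cid h))
  | right _ => 0
  end.

Definition S_ (p : R) (w a : nat -> R) (i : nat) : \bar R :=
  lnormp p w (fun j => if (j < i)%N then a j else 0).
Definition St_ (p : R) (w a : nat -> R) (i : nat) : \bar R :=
  lnormp p (fun j => w (i + j)%N) (fun j => a (i + j)%N).
Definition T_ (p : R) (w a : nat -> R) (i : nat) : \bar R :=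
  lnormp p w (fun j => a (i + j)%N).
Definition H_ (p : R) (w a : nat -> R) (i : nat) : \bar R :=
  (\sum_(0 <= j < i) ((`|a j| `^ p) * w_sinv a w j)%:E)%E.
Definition Ht_ (p : R) (w a : nat -> R) (i : nat) : \bar R :=
  (\sum_(i <= j <oo) ((`|a j| `^ p) * w_sinv a w j)%:E)%E.
Definition W_ (p : R) (w a : nat -> R) (i : nat) : \bar R :=
  (\sum_(0 <= j < i) ((`|a (sigma a j)| `^ p) * w j)%:E)%E.
Definition Wt_ (p : R) (w a : nat -> R) (i : nat) : \bar R :=
  (\sum_(i <= j <oo) ((`|a (sigma a j)| `^ p) * w j)%:E)%E.

End Lorentz.

From HB Require Import structures.
From mathcomp Require Import all_boot all_order all_algebra.
From mathcomp Require Import all_classical all_reals all_analysis.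
Set Implicit Arguments.
Unset Strict Implicit.
Unset Printing Implicit Defensive.
Import Order.TTheory GRing.Theory Num.Theory.
Local Open Scope ring_scope.

(* The greedy rearrangement [sigma a] lists the indices by nonincreasing [|a j|]; it
   exists because [a \in L_{p,w}] together with [sum w = +oo] forces [a j --> 0].
   For every [n], the values [|a (sigma a k)|^p], [k < n], are the [n] largest ones, so
   the prefix sums of any arrangement are dominated by those of [sigma a], and Abel
   summation against the nonincreasing weights gives
   [||a||^p = sum_k |a (sigma a k)|^p w k].  The two equalities split this series at [i],
   once in the order of [sigma a] and once, reindexed by [sigma a], in the natural order.
   For the upper bound, the terms with [sigma a k < i] and those with [sigma a k >= i],
   each moved to the front (which only increases the weights), are arrangements of the
   truncation and of the tail.  For the lower bound, an arrangement of the truncation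
   occupies at most [i] slots, so an arrangement of the tail can follow it with weights
   at least [w (i + k)]. *)

Definition swapn (u v z : nat) : nat :=
  if z == u then v else if z == v then u else z.

Lemma swapnK u v : involutive (swapn u v).
Proof.
move=> z; rewrite /swapn.
case: (eqVneq z u) => [->|zu]; first by rewrite eqxx; case: eqVneq.
case: (eqVneq z v) => [->|zv]; first by rewrite eqxx.
by rewrite (negbTE zu) (negbTE zv).
Qed.

Lemma uniq_bijective_prefix (e : seq nat) : uniq e ->
  exists2 s : nat -> nat, bijective s & forall m, (m < size e)%N -> s m = nth 0%N e m.
Proof.
elim/last_ind: e => [_|e x IH]; first by exists id => //; exists id.
rewrite rcons_uniq => /andP[xe ue]; have [s bs se] := IH ue.
have s_inj := bij_inj bs.
exists (swapn (s (size e)) x \o s).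
  by apply: bij_comp => //; exists (swapn (s (size e)) x); apply: swapnK.
move=> m; rewrite size_rcons ltnS leq_eqVlt => /orP[/eqP ->|me].
  by rewrite /= nth_rcons ltnn eqxx /swapn eqxx.
rewrite /= nth_rcons me -se // /swapn.
case: eqVneq => [/s_inj em|_]; first by rewrite em ltnn in me.
case: eqVneq => [sx|//]; move: xe.
by rewrite -sx se // mem_nth.
Qed.

Lemma sorted_ltn_nth_geq (s : seq nat) m :
  sorted ltn s -> (m < size s)%N -> (m <= nth 0%N s m)%N.
Proof.
move=> ss; elim: m => [//|m IH] ms.
apply: leq_ltn_trans (IH (ltnW ms)) _.
by apply: (sorted_ltn_nth ltn_trans) => //; rewrite inE ?(ltnW ms).
Qed.

Lemma notin_gt_bigmax (e : seq nat) k : (\max_(j <- e) j < k)%N -> k \notin e.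
Proof.
move=> ek; apply/negP => ke.
by have := @leq_bigmax_seq _ _ xpredT id k ke isT; rewrite leqNgt ek.
Qed.

Lemma uniq_seq_of_unbounded (P : pred nat) :
  (forall N, exists2 k, (N <= k)%N & P k) ->
  forall n, exists e, [/\ uniq e, size e = n & all P e].
Proof.
move=> Punb; elim=> [|n [e [ue se Pe]]]; first by exists [::].
have [k ek Pk] := Punb (\max_(j <- e) j).+1.
exists (rcons e k); split.
- by rewrite rcons_uniq ue notin_gt_bigmax.
- by rewrite size_rcons se.
- by rewrite all_rcons Pk.
Qed.

Lemma exists_max_below d (T : orderType d) (f : nat -> T) (P : pred nat) N k0 :
  (k0 < N)%N -> P k0 ->
  exists2 j, P j & forall k, (k < N)%N -> P k -> (f k <= f j)%O.
Proof.
move=> k0N Pk0.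
have [j Pj fj] := @arg_maxP _ _ 'I_N (Ordinal k0N) (fun i => P i) (fun i => f i) Pk0.
by exists j => // k kN Pk; apply: (fj (Ordinal kN)).
Qed.

Section NonincreasingWeights.
Variables (R : realType) (w : nat -> R).
Hypotheses (w_ge0 : forall k, 0 <= w k) (w_nonincr : forall k, w k.+1 <= w k).

Lemma abel_ler_sum (b c : nat -> R) n :
  (forall k, (k < n)%N -> \sum_(0 <= j < k.+1) b j <= \sum_(0 <= j < k.+1) c j) ->
  \sum_(0 <= k < n) b k * w k <= \sum_(0 <= k < n) c k * w k.
Proof.
case: n => [_|n bc]; first by rewrite !big_geq.
rewrite -subr_ge0 -sumrB.
have gap_ge0 k : (k < n.+1)%N -> 0 <= \sum_(0 <= j < k.+1) (c j - b j).
  by move=> kn; rewrite sumrB subr_ge0 bc.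
apply: le_trans (mulr_ge0 (gap_ge0 n (ltnSn n)) (w_ge0 n)) _.
elim: n bc gap_ge0 => [|n IH] bc gap_ge0; first by rewrite !big_nat1 mulrBl.
rewrite big_nat_recr //= [leRHS]big_nat_recr //= mulrDl -mulrBl.
apply: lerD => //; apply: le_trans (IH _ _) => //.
- by apply: ler_wpM2l; [apply: gap_ge0 | apply: w_nonincr].
- by move=> k kn; apply: bc; rewrite ltnS ltnW.
- by move=> k kn; apply: gap_ge0; rewrite ltnS ltnW.
Qed.

Lemma ler_sum_sorted_shift (s : seq nat) (h : nat -> R) :
  sorted ltn s -> (forall k, 0 <= h k) ->
  \sum_(k <- s) h k * w k <= \sum_(0 <= m < size s) h (nth 0%N s m) * w m.
Proof.
move=> ss h0; rewrite (big_nth 0%N); apply: ler_sum_nat => m /andP[_ ms].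
apply: ler_wpM2l => //; apply: (nonincreasing_seqP w).1 => //.
exact: sorted_ltn_nth_geq.
Qed.

End NonincreasingWeights.

Lemma big_nat_filterID (V : nmodType) (P : pred nat) (F : nat -> V) n :
  \sum_(0 <= k < n) F k =
  \sum_(k <- [seq k <- iota 0 n | P k]) F k + \sum_(k <- [seq k <- iota 0 n | ~~ P k]) F k.
Proof. by rewrite /index_iota subn0 (bigID P) !big_filter. Qed.

Section NonnegSeries.
Variable R : realType.
Local Open Scope classical_set_scope.
Local Open Scope ereal_scope.

Lemma nneseriesEFin_ge (u : nat -> R) n : (forall k, (0 <= u k)%R) ->
  (\sum_(0 <= k < n) u k)%:E <= \sum_(k <oo) (u k)%:E.
Proof. by move=> u0; rewrite -sumEFin; apply: nneseries_lim_ge => k _ _; rewrite lee_fin. Qed.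

Lemma nneseriesEFin_le (u : nat -> R) (L : \bar R) : (forall k, (0 <= u k)%R) ->
  (forall n, (\sum_(0 <= k < n) u k)%:E <= L) -> \sum_(k <oo) (u k)%:E <= L.
Proof.
move=> u0 uL; apply: lime_le.
  by apply: is_cvg_nneseries => k _ _; rewrite lee_fin.
by apply: nearW => n; rewrite sumEFin.
Qed.

Lemma ge_ereal_supD (A B : set (\bar R)) (L : \bar R) : L \is a fin_num ->
  A !=set0 -> B !=set0 -> (forall x, A x -> 0 <= x) -> (forall y, B y -> 0 <= y) ->
  (forall x y, A x -> B y -> x + y <= L) -> ereal_sup A + ereal_sup B <= L.
Proof.
move=> Lfin [x0 Ax0] [y0 By0] A0 B0 AB.
have supA_le y : B y -> ereal_sup A + y <= L.
  move=> By; rewrite -lee_suber_addr //; apply: ge_ereal_sup => x Ax.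
  by rewrite lee_suber_addr // AB.
have supA_fin : ereal_sup A \is a fin_num.
  rewrite ge0_fin_numE; last exact: le_trans (A0 _ Ax0) (ereal_sup_ubound Ax0).
  apply: le_lt_trans (lee_paddr (B0 _ By0) (lexx _)) _.
  by apply: le_lt_trans (supA_le _ By0) _; rewrite ltey_eq Lfin.
rewrite addeC -lee_suber_addr //; apply: ge_ereal_sup => y By.
by rewrite lee_suber_addr // addeC supA_le.
Qed.

End NonnegSeries.

Section LorentzNorm.
Variables (R : realType) (p : R).

Definition arrangement_sum (v x : nat -> R) (e : seq nat) : R :=
  \sum_(0 <= m < size e) `|x (nth 0%N e m)| `^ p * v m.

Lemma arrangement_sum_map_iota (v x : nat -> R) (f : nat -> nat) n :
  arrangement_sum v x (map f (iota 0 n)) = \sum_(0 <= m < n) `|x (f m)| `^ p * v m.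
Proof.
rewrite /arrangement_sum size_map size_iota; apply: eq_big_nat => m /andP[_ mn].
by rewrite (nth_map 0%N) ?size_iota // nth_iota.
Qed.

Lemma arrangement_sum_le_lnormp (v x : nat -> R) (e : seq nat) :
  (forall k, 0 <= v k) -> uniq e -> ((arrangement_sum v x e)%:E <= lnormp p v x)%E.
Proof.
move=> v0 ue; have [s bs se] := uniq_bijective_prefix ue.
apply: le_trans (ereal_sup_ubound _); last by exists s.
rewrite /arrangement_sum (eq_big_nat _ _ (F2 := fun m => `|x (s m)| `^ p * v m)).
  by apply: nneseriesEFin_ge => k; rewrite mulr_ge0 ?powR_ge0.
by move=> m /andP[_ me]; rewrite se.
Qed.

Lemma lnormp_ge0 (v x : nat -> R) : (forall k, 0 <= v k) -> (0 <= lnormp p v x)%E.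
Proof.
move=> v0; have := arrangement_sum_le_lnormp x v0 (isT : uniq [::]).
by rewrite /arrangement_sum big_geq.
Qed.

Variables (w a : nat -> R).
Hypotheses (p_ge0 : 0 <= p) (w_ge0 : forall k, 0 <= w k).
Hypotheses (w_div : (\sum_(k <oo) (w k)%:E = +oo)%E) (a_in : in_Lpw p w a).

Lemma in_Lpw_fin_num : lnormp p w a \is a fin_num.
Proof. by rewrite ge0_fin_numE ?lnormp_ge0. Qed.

Lemma in_Lpw_null d : 0 < d -> exists N, forall k, (N <= k)%N -> `|a k| < d.
Proof.
move=> d_gt0; apply/not_existsP => a_large.
have large_unb N : exists2 k, (N <= k)%N & d <= `|a k|.
  have /existsNP[k /not_implyP[Nk akd]] := a_large N.
  by exists k => //; rewrite leNgt; apply/negP.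
have dp_gt0 : 0 < d `^ p by rewrite powR_gt0.
have partial_le n : ((\sum_(0 <= k < n) w k)%:E <= (fine (lnormp p w a) / d `^ p)%:E)%E.
  have [e [ue se /allP ae]] := uniq_seq_of_unbounded (P := fun j => d <= `|a j|) large_unb n.
  rewrite lee_fin ler_pdivlMr // -lee_fin fineK ?in_Lpw_fin_num //.
  apply: le_trans (arrangement_sum_le_lnormp a w_ge0 ue).
  rewrite lee_fin /arrangement_sum se mulr_suml; apply: ler_sum_nat => m /andP[_ mn].
  rewrite mulrC ler_wpM2r // ge0_ler_powR ?nnegrE ?(ltW d_gt0) //.
  by rewrite ae ?mem_nth ?se.
by have := nneseriesEFin_le w_ge0 partial_le; rewrite w_div leye_eq.
Qed.

End LorentzNorm.

Section GreedyRearrangement.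
Variables (R : realType) (a : nat -> R).
Hypothesis a_null : forall d, 0 < d -> exists N, forall k, (N <= k)%N -> `|a k| < d.

Local Notation sg := (sigma a).

Lemma exists_max_notin (prev : seq nat) :
  exists2 j, j \notin prev & forall k, k \notin prev -> `|a k| <= `|a j|.
Proof.
have [[k0 k0prev ak0]|a0] :=
  pselect (exists2 k0, k0 \notin prev & 0 < `|a k0|); last first.
  exists (\max_(j <- prev) j).+1; first exact: notin_gt_bigmax.
  move=> k kprev; rewrite (le_trans _ (normr_ge0 _)) // leNgt.
  by apply/negP => ak; apply: a0; exists k.
have [N aN] := a_null ak0.
have k0N : (k0 < N)%N by rewrite ltnNge; apply/negP => /aN; rewrite ltxx.
have [j jprev aj] :=
  exists_max_below (fun k => `|a k|) (P := [pred k | k \notin prev]) k0N k0prev.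
exists j => // k kprev; case: (ltnP k N) => [kN|/aN ak]; first exact: aj.
exact: le_trans (ltW ak) (aj _ k0N k0prev).
Qed.

Lemma greedy_pick_spec (prev : seq nat) :
  greedy_pick a prev \notin prev /\
  forall k, k \notin prev -> `|a k| <= `|a (greedy_pick a prev)|.
Proof.
have [j0 j0prev aj0] := exists_max_notin prev.
pose P k := (k \notin prev) && (`|a k| == `|a j0|).
have Pj0 : P j0 by rewrite /P j0prev eqxx.
have [j /andP[jprev /eqP aj] jmin] := ex_minnP (ex_intro P j0 Pj0).
have least_max : exists j, j \notin prev /\ (forall k, k \notin prev -> `|a k| <= `|a j|)
   /\ (forall k, (k < j)%N -> k \notin prev -> `|a k| < `|a j|).
  exists j; split => //; split => [k kprev|k kj kprev]; first by rewrite aj aj0.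
  rewrite lt_neqAle aj aj0 // andbT; apply/negP => /eqP ak.
  by have := jmin k; rewrite /P kprev ak eqxx leqNgt kj => /(_ isT).
by have [? [? _]] := xgetPex 0%N least_max.
Qed.

Lemma size_greedy_prefix n : size (greedy_prefix a n) = n.
Proof. by elim: n => //= n IH; rewrite size_rcons IH. Qed.

Lemma sigmaE n : sg n = greedy_pick a (greedy_prefix a n).
Proof. by rewrite /sigma /= nth_rcons size_greedy_prefix ltnn eqxx. Qed.

Lemma map_sigma_iotaS n : map sg (iota 0 n.+1) = rcons (map sg (iota 0 n)) (sg n).
Proof. by rewrite -addn1 iotaD map_cat cats1. Qed.

Lemma greedy_prefixE n : greedy_prefix a n = map sg (iota 0 n).
Proof. by elim: n => // n IH; rewrite map_sigma_iotaS -IH sigmaE. Qed.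

Lemma sigma_notin n : sg n \notin map sg (iota 0 n).
Proof.
by rewrite sigmaE -greedy_prefixE; case: (greedy_pick_spec (greedy_prefix a n)).
Qed.

Lemma sigma_max n j : j \notin map sg (iota 0 n) -> `|a j| <= `|a (sg n)|.
Proof.
by rewrite sigmaE -greedy_prefixE; case: (greedy_pick_spec (greedy_prefix a n)) => _; apply.
Qed.

Lemma sigma_inj : injective sg.
Proof.
suff sg_neq m n : (m < n)%N -> sg m != sg n.
  by move=> m n smn; case: (ltngtP m n) => // mn; have := sg_neq _ _ mn; rewrite smn eqxx.
move=> mn; apply: contraNneq (sigma_notin n) => <-.
by rewrite map_f // mem_iota.
Qed.

Variable p : R.
Hypothesis p_ge0 : 0 <= p.

Lemma greedy_block_sum_max m n (J : seq nat) : uniq J -> size J = m ->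
  (forall j, j \in J -> j \notin map sg (iota 0 n)) ->
  \sum_(j <- J) `|a j| `^ p <= \sum_(n <= k < n + m) `|a (sg k)| `^ p.
Proof.
elim: m n J => [|m IH] n J uJ sJ Jfree; first by rewrite (size0nil sJ) big_nil addn0 big_geq.
rewrite big_ltn ?addnS ?ltnS ?leq_addr // -addSn.
have Jfree' j : j \in J -> j != sg n -> j \notin map sg (iota 0 n.+1).
  by move=> jJ jn; rewrite map_sigma_iotaS mem_rcons in_cons negb_or jn Jfree.
have [snJ|snJ] := boolP (sg n \in J).
  rewrite (perm_big _ (perm_to_rem snJ)) big_cons lerD // IH ?rem_uniq ?size_rem ?sJ //.
  by move=> j; rewrite mem_rem_uniq // => /andP[jn jJ]; apply: Jfree'.
case: J uJ sJ Jfree Jfree' snJ => [//|j0 J] /= /andP[j0J uJ] [sJ] Jfree Jfree' snJ.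
rewrite big_cons lerD ?IH //.
  by rewrite ge0_ler_powR ?nnegrE // sigma_max // Jfree ?mem_head.
move=> j jJ; apply: Jfree'; first by rewrite in_cons jJ orbT.
by apply: contraNneq snJ => <-; rewrite in_cons jJ orbT.
Qed.

Variable w : nat -> R.
Hypotheses (w_ge0 : forall k, 0 <= w k) (w_nonincr : forall k, w k.+1 <= w k).

Lemma arrangement_sum_le_greedy (e : seq nat) : uniq e ->
  arrangement_sum p w a e <= arrangement_sum p w a (map sg (iota 0 (size e))).
Proof.
move=> ue; rewrite arrangement_sum_map_iota; apply: abel_ler_sum => // k ke.
have sk : size (take k.+1 e) = k.+1 by rewrite size_takel.
have -> : \sum_(0 <= j < k.+1) `|a (nth 0%N e j)| `^ p = \sum_(j <- take k.+1 e) `|a j| `^ p.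
  by rewrite [RHS](big_nth 0%N) sk; apply: eq_big_nat => j /andP[_ jk]; rewrite nth_take.
by rewrite -[k.+1]add0n greedy_block_sum_max ?take_uniq.
Qed.

End GreedyRearrangement.

Section LorentzDecomposition.
Variables (R : realType) (p : R) (w a : nat -> R).
Hypotheses (p_gt0 : 0 < p) (w_ge0 : forall k, 0 <= w k) (w_nonincr : forall k, w k.+1 <= w k).
Hypotheses (w_div : (\sum_(k <oo) (w k)%:E = +oo)%E) (a_in : in_Lpw p w a).

Local Notation sg := (sigma a).

Let p_ge0 : 0 <= p := ltW p_gt0.
Let a_null := in_Lpw_null p_ge0 w_ge0 w_div a_in.
Let greedy_term_ge0 k : 0 <= `|a (sg k)| `^ p * w k.
Proof. by rewrite mulr_ge0 ?powR_ge0. Qed.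

Lemma lnormp_greedy : lnormp p w a = (\sum_(k <oo) (`|a (sg k)| `^ p * w k)%:E)%E.
Proof.
apply/eqP; rewrite eq_le; apply/andP; split.
  apply: ge_ereal_sup => _ [s bs <-].
  apply: nneseriesEFin_le => [k|n]; first by rewrite mulr_ge0 ?powR_ge0.
  apply: le_trans (nneseriesEFin_ge n greedy_term_ge0).
  have us : uniq (map s (iota 0 n)) by rewrite map_inj_uniq ?iota_uniq //; apply: bij_inj.
  have := arrangement_sum_le_greedy a_null p_ge0 w_ge0 w_nonincr us.
  by rewrite size_map size_iota !arrangement_sum_map_iota lee_fin.
apply: nneseriesEFin_le greedy_term_ge0 _ => n.
have us : uniq (map sg (iota 0 n)) by rewrite map_inj_uniq ?iota_uniq //; apply: sigma_inj.
by rewrite -arrangement_sum_map_iota arrangement_sum_le_lnormp.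
Qed.

Lemma lnormp_W_split i : lnormp p w a = (W_ p w a i + Wt_ p w a i)%E.
Proof. by rewrite lnormp_greedy (nneseries_split 0 i) ?add0n // => k _; rewrite lee_fin. Qed.

Lemma w_sinv_sigma k : w_sinv a w (sg k) = w k.
Proof.
rewrite /w_sinv; case: pselect => [sk|[]]; last by exists k.
by case: cid => k' /= /(sigma_inj a_null) ->.
Qed.

Lemma w_sinv_ge0 j : 0 <= w_sinv a w j.
Proof. by rewrite /w_sinv; case: pselect. Qed.

Lemma w_sinv_out j : j \notin range sg -> w_sinv a w j = 0.
Proof.
move/negP=> jr; rewrite /w_sinv; case: pselect => // sj.
by case: jr; rewrite inE; have [k kj] := sj; exists k.
Qed.

Lemma greedy_series_reindex :
  (\sum_(k <oo) (`|a (sg k)| `^ p * w k)%:E = \sum_(j <oo) (`|a j| `^ p * w_sinv a w j)%:E)%E.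
Proof.
rewrite !nneseries_esumT => [|k|k]; last 2 first.
- by rewrite lee_fin mulr_ge0 ?powR_ge0 ?w_sinv_ge0.
- by rewrite lee_fin.
rewrite [RHS](eq_esum (b := fun j =>
    if j \in range sg then (`|a j| `^ p * w_sinv a w j)%:E else 0%E)); last first.
  by move=> j _; case: ifPn => // /w_sinv_out ->; rewrite mulr0.
rewrite -esum_mkcond (reindex_esum _ _ _ _ (inj_bij (in2W (sigma_inj a_null)))).
by apply: eq_esum => k _; rewrite w_sinv_sigma.
Qed.

Lemma lnormp_H_split i : lnormp p w a = (H_ p w a i + Ht_ p w a i)%E.
Proof.
rewrite lnormp_greedy greedy_series_reindex (nneseries_split 0 i) ?add0n // => k _.
by rewrite lee_fin mulr_ge0 ?powR_ge0 ?w_sinv_ge0.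
Qed.

Lemma sorted_greedy_sum_le_lnormp (K : seq nat) (g : nat -> nat) (x : nat -> R) :
  sorted ltn K -> uniq (map g K) -> {in K, forall k, x (g k) = a (sg k)} ->
  ((\sum_(k <- K) `|a (sg k)| `^ p * w k)%:E <= lnormp p w x)%E.
Proof.
move=> sK ugK xg; apply: le_trans (arrangement_sum_le_lnormp p x w_ge0 ugK).
rewrite lee_fin /arrangement_sum size_map.
apply: le_trans (ler_sum_sorted_shift (h := fun k => `|a (sg k)| `^ p) w_nonincr sK _) _.
  by move=> k; apply: powR_ge0.
by apply: ler_sum_nat => m /andP[_ mK]; rewrite (nth_map 0%N) // xg ?mem_nth.
Qed.

Lemma lnormp_le_S_T i : (lnormp p w a <= S_ p w a i + T_ p w a i)%E.
Proof.
rewrite lnormp_greedy; apply: nneseriesEFin_le greedy_term_ge0 _ => n.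
rewrite (big_nat_filterID (fun k => (sg k < i)%N)) EFinD.
have sorted_part (P : pred nat) : sorted ltn [seq k <- iota 0 n | P k].
  by apply: sorted_filter; [apply: ltn_trans | apply: iota_ltn_sorted].
apply: leeD; first apply: (sorted_greedy_sum_le_lnormp (g := sg)) => //.
- by rewrite map_inj_uniq ?filter_uniq ?iota_uniq //; apply: sigma_inj.
- by move=> k; rewrite mem_filter => /andP[-> _].
apply: (sorted_greedy_sum_le_lnormp (g := fun k => sg k - i)%N) => //.
- rewrite map_inj_in_uniq ?filter_uniq ?iota_uniq // => k k'.
  rewrite !mem_filter -!leqNgt => /andP[ik _] /andP[ik' _] /= kk'.
  by apply: (sigma_inj a_null); rewrite -(subnKC ik) -(subnKC ik') kk'.
- by move=> k; rewrite mem_filter -leqNgt => /andP[ik _]; rewrite subnKC.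
Qed.

Lemma arrangement_sum_cat_le_lnormp (e1 e2 : seq nat) i :
  uniq (e1 ++ e2) -> (size e1 <= i)%N ->
  ((arrangement_sum p w a e1 + arrangement_sum p (fun m => w (i + m)%N) a e2)%:E
     <= lnormp p w a)%E.
Proof.
move=> ue e1i; apply: le_trans (arrangement_sum_le_lnormp p a w_ge0 ue).
rewrite lee_fin {3}/arrangement_sum size_cat (big_cat_nat (leq0n _) (leq_addr _ _)) /=.
apply: lerD; first by apply: ler_sum_nat => m /andP[_ m1]; rewrite nth_cat m1.
rewrite /arrangement_sum -{1}[size e1]add0n big_addn addKn; apply: ler_sum_nat => m _.
rewrite nth_cat ltnNge leq_addl addnK /= ler_wpM2l ?powR_ge0 //.
by apply: (nonincreasing_seqP w).1; rewrite // addnC leq_add2r.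
Qed.

Lemma truncation_tail_sum_le_lnormp i (s t : nat -> nat) n : injective s -> injective t ->
  ((\sum_(0 <= k < n) `|(if (s k < i)%N then a (s k) else 0)| `^ p * w k
    + \sum_(0 <= k < n) `|a (i + t k)%N| `^ p * w (i + k)%N)%:E <= lnormp p w a)%E.
Proof.
move=> s_inj t_inj; pose K := [seq k <- iota 0 n | (s k < i)%N].
have uK : uniq (map s K) by rewrite map_inj_uniq ?filter_uniq ?iota_uniq.
have Ki : (size (map s K) <= i)%N.
  rewrite -(size_iota 0 i); apply: uniq_leq_size => // _ /mapP[k + ->].
  by rewrite mem_filter mem_iota => /andP[ski _]; rewrite mem_iota ski.
have ue : uniq (map s K ++ map (fun k => i + t k)%N (iota 0 n)).
  rewrite cat_uniq uK map_inj_uniq ?iota_uniq /=; last by move=> k k' /addnI /t_inj.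
  rewrite andbT; apply/hasPn => _ /mapP[k _ ->]; apply/mapP => -[k'].
  by rewrite mem_filter => /andP[sk'i _] sk'; rewrite -sk' ltnNge leq_addr in sk'i.
apply: le_trans (arrangement_sum_cat_le_lnormp ue Ki).
rewrite arrangement_sum_map_iota lee_fin lerD //.
rewrite (big_nat_filterID (fun k => (s k < i)%N)).
rewrite [X in _ + X]big1_seq ?addr0 => [|k]; last first.
  by rewrite mem_filter => /andP[_ /andP[/negbTE -> _]]; rewrite normr0 powR0 ?mul0r ?gt_eqF.
rewrite (eq_big_seq (fun k => `|a (s k)| `^ p * w k)) => [|k]; last first.
  by rewrite mem_filter => /andP[->].
have sK : sorted ltn K by apply: sorted_filter; [apply: ltn_trans | apply: iota_ltn_sorted].
apply: le_trans (ler_sum_sorted_shift (h := fun k => `|a (s k)| `^ p) w_nonincr sK _) _.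
  by move=> k; apply: powR_ge0.
rewrite /arrangement_sum size_map.
by apply: ler_sum_nat => m /andP[_ mK]; rewrite (nth_map 0%N).
Qed.

Lemma S_St_le_lnormp i : (S_ p w a i + St_ p w a i <= lnormp p w a)%E.
Proof.
apply: ge_ereal_supD.
- exact: in_Lpw_fin_num.
- by eexists; exists id => //; exists id.
- by eexists; exists id => //; exists id.
- by move=> _ [s _ <-]; apply: nneseries_ge0 => k _ _; rewrite lee_fin mulr_ge0 ?powR_ge0.
- by move=> _ [s _ <-]; apply: nneseries_ge0 => k _ _; rewrite lee_fin mulr_ge0 ?powR_ge0.
move=> _ _ [s bs <-] [t bt <-].
rewrite -nneseriesD => [|k _ _|k _ _]; last 2 first.
- by rewrite lee_fin mulr_ge0 ?powR_ge0.
- by rewrite lee_fin mulr_ge0 ?powR_ge0.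
under eq_eseriesr do rewrite -EFinD.
apply: nneseriesEFin_le => [k|n]; first by rewrite addr_ge0 ?mulr_ge0 ?powR_ge0.
by rewrite big_split; apply: truncation_tail_sum_le_lnormp; apply: bij_inj.
Qed.

End LorentzDecomposition.

Theorem mainTheorem10 (R : realType) (p : R) (w a : nat -> R) (i : nat) :
  1 <= p -> weight_seq w -> in_Lpw p w a -> (0 < i)%N ->
  [/\ (S_ p w a i + St_ p w a i <= lnormp p w a)%E,
      lnormp p w a = (H_ p w a i + Ht_ p w a i)%E,
      lnormp p w a = (W_ p w a i + Wt_ p w a i)%E &
      (W_ p w a i + Wt_ p w a i <= S_ p w a i + T_ p w a i)%E].
Proof.
(* None of [0 < i], [w 0 = 1], [w --> 0] is needed, and [0 < p] suffices. *)
move=> p_ge1 [_ w_gt0 w_nonincr _ w_div] a_in _.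
have p_gt0 : 0 < p := lt_le_trans ltr01 p_ge1.
have w_ge0 k : 0 <= w k := ltW (w_gt0 k).
split.
- exact: S_St_le_lnormp.
- exact: lnormp_H_split.
- exact: lnormp_W_split.
- by rewrite -lnormp_W_split //; apply: lnormp_le_S_T.
Qed.
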